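(* Let $m\geq4$ be an integer, let $G$ be an $m$-free digraph, let $v\in V(G)$ and let $k$ be an integer with $1\leq k\leq m-3$. Put $V_1=\bigcup_{i=1}^{k+1}N_i^-(v)$ and $V_2=V(G)\setminus V_1$. Then the set of edges of $G$ from $V_2$ to $V_1$ equals $E(N^-_{k+2}(v),N^-_{k+1}(v))$, so it has exactly $r'_k(v)$ elements, and the number of pairs $(a,b)\in V_1\times V_2$ such that neither $(a,b)$ nor $(b,a)$ is an edge is at least $t_k(v)$.
   Context: All digraphs are finite, without loops and without parallel edges. A digraph is $m$-free if it has no directed cycle of length at most $m$. For a vertex $v$ and $i\geq 0$, $N_i^+(v)$ is the set of vertices $u$ such that the shortest directed path from $v$ to $u$ has length exactly $i$, and $N_i^-(v)$ is the set of vertices $u$ such that the shortest directed path from $u$ to $v$ has length exactly $i$. For $A,B\subseteq V(G)$, $E(A,B)$ is the set of edges $(a,b)$ with $a\in A$, $b\in B$. A directed path $(v_0,\dots,v_k)$ consists of distinct vertices with $(v_i,v_{i+1})$ an edge for each $i$; its length is $k$. It is induced if every edge of $G$ with both ends in $\{v_0,\dots,v_k\}$ is one of the edges $(v_i,v_{i+1})$; it is a shortest induced directed path if it is induced and $v_k\in N_k^+(v_0)$. Let $\mathscr{P}(G)$ be the set of shortest induced directed paths of $G$. For an integer $k\geq1$ and $v\in V(G)$: $Q_k(v)$ (resp. $R_k(v)$) is the set of triples $(x,y,z)$ of vertices for which there exist vertices $w_1,\dots,w_k$ with $(x,w_1,\dots,w_k,y,z)\in\mathscr{P}(G)$ and $y=v$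 (resp. $z=v$). $R'_k(v)$ is the set of triples $(x,y,z)$ for which there exist $w_1,\dots,w_k$ with $(x,y,w_1,\dots,w_k,z)\in\mathscr{P}(G)$ and $z=v$. $q_k(v)=|Q_k(v)|$, $r_k(v)=|R_k(v)|$, $r'_k(v)=|R'_k(v)|$. For $1\leq k\leq m-3$: $t_k(v)=\sum_{i=k}^{m-3}r_i(v)+\sum_{i=1}^{k}q_i(v)$. *)

(* A digraph on a finite vertex type T is an edge relation
   e : rel T (no parallel edges by construction; loops are excluded by
   m-freeness, which forbids cycles of length 1). *)
From mathcomp Require Import all_boot.
Set Implicit Arguments. Unset Strict Implicit. Unset Printing Implicit Defensive.

Section Digraph.
Variables (T : finType) (e : rel T).

Definition reach (n : nat) (x y : T) : bool :=
  [exists p : n.-tuple T, path e x p && (last x p == y)].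

Definition isdist (n : nat) (x y : T) : bool :=
  reach n x y && [forall j : 'I_n, ~~ reach j x y].

Definition Nout (i : nat) (v : T) : {set T} := [set u | isdist i v u].
Definition Nin (i : nat) (v : T) : {set T} := [set u | isdist i u v].

(* m-free: no directed cycle of length at most m.  A directed cycle of
   length L >= 1 is a duplicate-free sequence c of L vertices with
   c_0 -> c_1 -> ... -> c_{L-1} -> c_0. *)
Definition m_free (m : nat) : Prop :=
  forall c : seq T, 0 < size c <= m -> uniq c -> ~~ cycle e c.

Definition SIP (x : T) (p : seq T) : bool :=
  let s := x :: p in
  [&& path e x p, uniq s,
      [forall i : 'I_(size s), forall j : 'I_(size s),
          e (nth x s i) (nth x s j) ==> (val j == (val i).+1)]
    & isdist (size p) x (last x p)].

Definition Qset (k : nat) (v : T) : {set T * T * T} :=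
  [set t | [exists w : k.-tuple T,
     SIP t.1.1 (w ++ [:: t.1.2; t.2]) && (t.1.2 == v)]].
Definition Rset (k : nat) (v : T) : {set T * T * T} :=
  [set t | [exists w : k.-tuple T,
     SIP t.1.1 (w ++ [:: t.1.2; t.2]) && (t.2 == v)]].
Definition R'set (k : nat) (v : T) : {set T * T * T} :=
  [set t | [exists w : k.-tuple T,
     SIP t.1.1 (t.1.2 :: rcons w t.2) && (t.2 == v)]].

Definition qk (k : nat) (v : T) : nat := #|Qset k v|.
Definition rk (k : nat) (v : T) : nat := #|Rset k v|.
Definition r'k (k : nat) (v : T) : nat := #|R'set k v|.

Definition tk (m k : nat) (v : T) : nat :=
  \sum_(k <= i < (m - 3).+1) rk i v + \sum_(1 <= i < k.+1) qk i v.

Definition Eset (A B : {set T}) : {set T * T} :=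
  [set ab | [&& ab.1 \in A, ab.2 \in B & e ab.1 ab.2]].

End Digraph.

From mathcomp Require Import all_boot zify.
Set Implicit Arguments. Unset Strict Implicit. Unset Printing Implicit Defensive.

(* m-freeness: a closed walk of length <= m contains a cycle of length <= m,
   so none exists; consequently a shortest walk of length < m is an induced
   path (SIP), and an edge x -> z is never followed by a walk of length < m
   back to x.

   The theorem: the back edges V_2 -> V_1 go from distance k + 2 to k + 1 and
   are the first edges of the triples of R'_k(v).  For the bound, the pairs
   (y, x) from R_i(v), k <= i <= m - 3, and (x, z) from Q_i(v), 1 <= i <= k,
   are non-adjacent pairs across (V_1, V_2), in bijection with the triples,
   and all these families are pairwise disjoint (distances separate them), so
   their total size t_k(v) is at most the number of such pairs. *)

Section Walks.
Variables (T : finType) (e : rel T).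
Implicit Types (x y z : T) (p : seq T).

Lemma reach0 x y : reach e 0 x y = (x == y).
Proof.
apply/existsP/eqP => [[p]|->]; first by rewrite tuple0 => /eqP.
by exists [tuple]; rewrite /=.
Qed.

Lemma reachS n x y : reach e n.+1 x y = [exists z, e x z && reach e n z y].
Proof.
apply/existsP/existsP => [[p]|[z /andP[exz /existsP[q Hq]]]].
- case: p / tupleP => z q /= /andP[/andP[exz pq] lq].
  by exists z; rewrite exz; apply/existsP; exists q; rewrite pq.
- by exists (cons_tuple z q); rewrite /= exz.
Qed.

Lemma reach1 x y : e x y -> reach e 1 x y.
Proof. by move=> exy; rewrite reachS; apply/existsP; exists y; rewrite exy reach0 eqxx. Qed.

Lemma reach_cat a b x y z : reach e a x y -> reach e b y z -> reach e (a + b) x z.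
Proof.
elim: a x => [|a IH] x; first by rewrite reach0 => /eqP->.
rewrite reachS addSn reachS => /existsP[w /andP[exw rw]] ryz.
by apply/existsP; exists w; rewrite exw (IH w).
Qed.

Lemma reach_walk n x y : reach e n x y ->
  exists p, [/\ size p = n, path e x p & last x p = y].
Proof. by case/existsP=> p /andP[pp /eqP lp]; exists p; rewrite size_tuple. Qed.

Lemma walk_reach x p : path e x p -> reach e (size p) x (last x p).
Proof. by move=> pp; apply/existsP; exists (in_tuple p); rewrite pp /=. Qed.

Lemma path_reach x0 x p i j : path e x p -> i <= j <= size p ->
  reach e (j - i) (nth x0 (x :: p) i) (nth x0 (x :: p) j).
Proof.
elim: p x i j => [|y p IH] x i j /=.
  move=> _ /andP[ij j0]; have -> : j = 0 by lia.
  have -> : i = 0 by lia.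
  by rewrite subnn reach0 eqxx.
case/andP=> exy pyp; case: i => [|i]; case: j => [|j] //=; last exact: IH.
- by rewrite reach0.
- move=> jp; rewrite subn0 reachS; apply/existsP; exists y; rewrite exy /=.
  by have := IH y 0 j pyp jp; rewrite subn0.
Qed.

Lemma isdist_reach n x y : isdist e n x y -> reach e n x y.
Proof. by case/andP. Qed.

Lemma isdist_min n j x y : isdist e n x y -> j < n -> ~~ reach e j x y.
Proof. by case/andP=> _ /forallP H jn; exact: (H (Ordinal jn)). Qed.

Lemma reach_isdist n x y : reach e n x y -> exists2 j, j <= n & isdist e j x y.
Proof.
move=> rn; have ex : exists j, reach e j x y by exists n.
case: (ex_minnP ex) => j rj minj; exists j; first exact: minj.
rewrite /isdist rj; apply/forallP => i; apply/negP => /minj.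
by rewrite leqNgt ltn_ord.
Qed.

Lemma isdist_uniq a b x y : isdist e a x y -> isdist e b x y -> a = b.
Proof.
move=> Ha Hb; case: (ltngtP a b) => // H.
- by have := isdist_min Hb H; rewrite isdist_reach.
- by have := isdist_min Ha H; rewrite isdist_reach.
Qed.

Lemma isdist_behead n x y z :
  e x y -> reach e n y z -> isdist e n.+1 x z -> isdist e n y z.
Proof.
move=> exy ryz Hd; rewrite /isdist ryz; apply/forallP => j; apply/negP => rj.
have := isdist_min Hd (_ : j.+1 < n.+1); rewrite reachS ltnS ltn_ord => /(_ isT).
by case/existsP; exists y; rewrite exy.
Qed.

Lemma isdist_belast n x y z :
  reach e n x y -> e y z -> isdist e n.+1 x z -> isdist e n x y.
Proof.
move=> rxy eyz Hd; rewrite /isdist rxy; apply/forallP => j; apply/negP => rj.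
have := isdist_min Hd (_ : j + 1 < n.+1); rewrite addn1 ltnS ltn_ord => /(_ isT).
by rewrite -addn1 (reach_cat rj (reach1 eyz)).
Qed.

End Walks.

Section ShortCycles.
Variables (T : finType) (e : rel T) (m : nat).
Hypothesis free : m_free e m.
Implicit Types (x y z : T) (p : seq T).

(* In an m-free digraph there is no closed walk of length 1..m: a closed walk
   without repeated vertex is a directed cycle, and one with a repeated vertex
   contains a shorter closed walk (strong induction on the length). *)
Lemma no_short_closed_walk n x : 0 < n <= m -> ~~ reach e n x x.
Proof.
elim/ltn_ind: n x => n IH x /andP[n0 nm]; apply/negP => /reach_walk[p [sp pp lp]].
case/lastP: p sp pp lp => [|q y] sp pp lp; first by rewrite -sp in n0.
rewrite last_rcons in lp; subst y.
have /(uniqPn x)[i [j [ij js Eij]]] : ~~ uniq (x :: q).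
  apply/negP => Uq; have Sq : 0 < size (x :: q) <= m by rewrite /= -(size_rcons q x) sp.
  by move/negP: (free Sq Uq); rewrite /= pp.
have jn : j < n by rewrite -sp size_rcons.
have ijq : i <= j <= size (rcons q x) by rewrite size_rcons (ltnW ij) ltnW.
have := path_reach x pp ijq.
rewrite -rcons_cons !nth_rcons (ltn_trans ij js) js Eij.
by apply/negP/IH; lia.
Qed.

Lemma edge_no_short_return j x z : e x z -> reach e j z x -> j < m -> False.
Proof.
move=> exz rzx jm; have /negP := @no_short_closed_walk j.+1 x jm.
by apply; rewrite reachS; apply/existsP; exists z; rewrite exz.
Qed.

(* A shortest walk of length < m is an induced path: a repeated vertex or a
   forward chord would shorten it, and a backward chord would close a cycle
   of length at most m. *)
Lemma shortest_walk_SIP x p : size p < m -> path e x p ->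
  isdist e (size p) x (last x p) -> SIP e x p.
Proof.
move=> pm pp Hd; set s := x :: p.
have lastE : nth x s (size p) = last x p by exact: (nth_last x s).
have from_x i : i <= size p -> reach e i x (nth x s i).
  by move=> ip; have := path_reach x pp (_ : 0 <= i <= size p); rewrite subn0 ip; apply.
have to_last j : j <= size p -> reach e (size p - j) (nth x s j) (last x p).
  by move=> jp; rewrite -lastE; apply: path_reach; rewrite // jp leqnn.
have Us : uniq s.
  apply: contraT => /(uniqPn x)[i [j [ij js Eij]]]; have jp : j <= size p by [].
  have := from_x i (ltnW (leq_trans ij jp)); rewrite Eij => /reach_cat/(_ (to_last j jp)).
  have short : i + (size p - j) < size p by lia.
  by rewrite (negbTE (isdist_min Hd short)).
rewrite /SIP pp Us Hd andbT /=; apply/forallP => i; apply/forallP => j.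
apply/implyP => eij; have ip : i <= size p := ltn_ord i; have jp : j <= size p := ltn_ord j.
case: (ltngtP j i.+1) => // ji.
- have jip : j <= i <= size p by rewrite ip -ltnS ji.
  have cyc : 0 < i - j + 1 <= m by lia.
  have := reach_cat (path_reach x pp jip) (reach1 eij).
  by rewrite (negbTE (no_short_closed_walk _ cyc)).
- have short : i + 1 + (size p - j) < size p by lia.
  have := reach_cat (reach_cat (from_x i ip) (reach1 eij)) (to_last j jp).
  by rewrite (negbTE (isdist_min Hd short)).
Qed.

End ShortCycles.

Section InducedPaths.
Variables (T : finType) (e : rel T).
Implicit Types (x y z : T) (p : seq T).

Lemma SIP_chordless x p i j : SIP e x p -> i < size (x :: p) -> j < size (x :: p) ->
  e (nth x (x :: p) i) (nth x (x :: p) j) -> j = i.+1.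
Proof.
case/and4P => _ _ /forallP H _ iS jS eij.
by have := forallP (H (Ordinal iS)) (Ordinal jS); rewrite /= eij => /eqP.
Qed.

Lemma nth_last2 x (w : seq T) y z :
  nth x (x :: w ++ [:: y; z]) (size w).+1 = y /\ nth x (x :: w ++ [:: y; z]) (size w).+2 = z.
Proof. by rewrite /= !nth_cat ltnn subnn ltnNge leqnSn /= subSnn. Qed.

Lemma Rset_triple i v x y z : (x, y, z) \in Rset e i v ->
  [/\ z = v, isdist e i.+2 x v, isdist e 1 y v, 0 < i -> ~~ e x y & ~~ e y x].
Proof.
rewrite inE /= => /existsP[w /andP[Hs /eqP zv]]; subst z.
have [ny nv] := nth_last2 x w y v; rewrite size_tuple in ny nv.
have Us : uniq (x :: w ++ [:: y; v]) by case/and4P: Hs.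
have Hd : isdist e i.+2 x v.
  by case/and4P: Hs => _ _ _; rewrite size_cat size_tuple last_cat addn2.
have eyv : e y v by case/and4P: Hs; rewrite cat_path => /andP[_] /= /and3P[_ ->].
have sizeS : size (x :: w ++ [:: y; v]) = i.+3 by rewrite /= size_cat size_tuple addn2.
have iS : i.+1 < size (x :: w ++ [:: y; v]) by rewrite sizeS.
split => //.
- rewrite /isdist reach1 //=; apply/forallP => j; rewrite (ord1 j) reach0.
  have i2S : i.+2 < size (x :: w ++ [:: y; v]) by rewrite sizeS.
  by have := nth_uniq x iS i2S Us; rewrite ny nv => ->; rewrite eqn_leq ltnn andbF.
- move=> i0; apply/negP; rewrite -{1}ny => /(SIP_chordless Hs (ltn0Sn _) iS) [].
  by move=> i0'; rewrite i0' in i0.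
- by apply/negP; rewrite -{1}ny => /(SIP_chordless Hs iS (ltn0Sn _)).
Qed.

Lemma Qset_triple i v x y z : (x, y, z) \in Qset e i v ->
  [/\ y = v, isdist e i.+1 x v, e v z, ~~ e x z & ~~ e z x].
Proof.
rewrite inE /= => /existsP[w /andP[Hs /eqP yv]]; subst y.
have [nv nz] := nth_last2 x w v z; rewrite size_tuple in nv nz.
have pp : path e x (w ++ [:: v; z]) by case/and4P: Hs.
have Hd : isdist e i.+2 x z.
  by case/and4P: Hs => _ _ _; rewrite size_cat size_tuple last_cat addn2.
have evz : e v z by move: pp; rewrite cat_path => /andP[_] /= /and3P[_ ->].
have iS : i.+2 < size (x :: w ++ [:: v; z]) by rewrite /= size_cat size_tuple addn2.
split => //.
- apply: isdist_belast evz Hd.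
  have bnd : 0 <= i.+1 <= size (w ++ [:: v; z]) by rewrite size_cat size_tuple /=; lia.
  by have := path_reach x pp bnd; rewrite subn0 nv.
- by apply/negP; rewrite -{1}nz => /(SIP_chordless Hs (ltn0Sn _) iS).
- by apply/negP; rewrite -{1}nz => /(SIP_chordless Hs iS (ltn0Sn _)).
Qed.

End InducedPaths.

Section DisjointCounting.
Variables (I : eqType) (U : finType).
Implicit Types (r : seq I) (F : I -> {set U}).

Lemma mem_bigcup_seq r F x : (x \in \bigcup_(i <- r) F i) = has (fun i => x \in F i) r.
Proof. by elim: r => [|a r IH]; rewrite ?big_nil ?big_cons ?inE //= IH. Qed.

Lemma card_bigcup_disjoint r F : uniq r ->
  (forall i j x, i \in r -> j \in r -> x \in F i -> x \in F j -> i = j) ->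
  #|\bigcup_(i <- r) F i| = \sum_(i <- r) #|F i|.
Proof.
elim: r => [|a r IH] /=; first by rewrite !big_nil cards0.
case/andP=> ar ur disjF; rewrite !big_cons cardsU IH //; last first.
  by move=> i j x ir jr; apply: disjF; rewrite inE ?ir ?jr orbT.
suff -> : F a :&: \bigcup_(i <- r) F i = set0 by rewrite cards0 subn0.
apply/setP => x; rewrite !inE mem_bigcup_seq; apply/andP => -[xa /hasP[j jr xj]].
have aj := disjF a j x (mem_head a r); rewrite inE jr orbT in aj.
by move: ar; rewrite (aj isT xa xj) jr.
Qed.

Lemma sum_card_disjoint_le r1 r2 F1 F2 (P : {set U}) : uniq r1 -> uniq r2 ->
  (forall i j x, i \in r1 -> j \in r1 -> x \in F1 i -> x \in F1 j -> i = j) ->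
  (forall i j x, i \in r2 -> j \in r2 -> x \in F2 i -> x \in F2 j -> i = j) ->
  (forall i j x, i \in r1 -> j \in r2 -> x \in F1 i -> x \in F2 j -> False) ->
  (forall i, i \in r1 -> F1 i \subset P) -> (forall i, i \in r2 -> F2 i \subset P) ->
  \sum_(i <- r1) #|F1 i| + \sum_(i <- r2) #|F2 i| <= #|P|.
Proof.
move=> u1 u2 disj1 disj2 disj12 sub1 sub2.
rewrite -card_bigcup_disjoint // -card_bigcup_disjoint //.
set A := \bigcup_(i <- r1) F1 i; set B := \bigcup_(i <- r2) F2 i.
have AB0 : A :&: B = set0.
  apply/setP => x; rewrite !inE !mem_bigcup_seq.
  by apply/andP => -[/hasP[i ir xi] /hasP[j jr xj]]; apply: (disj12 i j x).
rewrite -[_ + _]subn0 -(cards0 U) -AB0 -cardsU.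
apply/subset_leq_card/subsetP => x; rewrite inE !mem_bigcup_seq.
by case/orP => /hasP[i ir xi]; [apply: (subsetP (sub1 i ir)) | apply: (subsetP (sub2 i ir))].
Qed.

End DisjointCounting.

Section Theorem8.
Variables (T : finType) (e : rel T) (m : nat) (v : T) (k : nat).
Hypotheses (free : m_free e m) (k_small : k.+2 < m).
Implicit Types (x y z : T).

Definition V1 : {set T} := \bigcup_(1 <= i < k.+2) Nin e i v.

Definition nonadjacent (A B : {set T}) : {set T * T} :=
  [set ab | [&& ab.1 \in A, ab.2 \in B, ~~ e ab.1 ab.2 & ~~ e ab.2 ab.1]].

Lemma V1P x : reflect (exists2 i, 0 < i <= k.+1 & isdist e i x v) (x \in V1).
Proof.
rewrite /V1 mem_bigcup_seq; apply: (iffP hasP) => -[i].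
- by rewrite mem_index_iota inE => iV xi; exists i.
- by move=> iV xi; exists i; rewrite ?mem_index_iota ?inE.
Qed.

Lemma notin_V1 j x : isdist e j x v -> k.+1 < j -> x \notin V1.
Proof. by move=> xj jk; apply/V1P => -[i ik /(isdist_uniq xj) ji]; lia. Qed.

(* An out-neighbour of v lies outside V_1: otherwise it closes a cycle of
   length at most k + 2 <= m. *)
Lemma out_neighbour_notin_V1 z : e v z -> z \notin V1.
Proof.
move=> evz; apply/V1P => -[i ik /isdist_reach zi].
by apply: (edge_no_short_return free evz zi); lia.
Qed.

(* First claim: the edges from V_2 into V_1 are exactly those from distance
   k + 2 to distance k + 1.  For an edge (a, b) with b at distance i <= k + 1,
   a is at distance at most i + 1; a = v would close a cycle of length
   i + 1 <= m, and a outside V_1 forces distance k + 2, hence i = k + 1. *)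
Lemma back_edges :
  Eset e (~: V1) V1 = Eset e (Nin e k.+2 v) (Nin e k.+1 v).
Proof.
apply/setP => -[a b]; rewrite !inE /=; apply/and3P/and3P => -[aV bV eab].
- case/V1P: bV => i ik bi.
  have [j ji aj] := reach_isdist (reach_cat (reach1 eab) (isdist_reach bi)).
  have jk : k.+1 < j.
    rewrite ltnNge; apply/negP => jk; case: j ji aj jk => [|j] ji aj jk.
      move: (isdist_reach aj); rewrite reach0 => /eqP ab; subst a.
      by apply: (edge_no_short_return free eab (isdist_reach bi)); lia.
    by move/negP: aV; apply; apply/V1P; exists j.+1.
  have jE : j = k.+2 by lia.
  have iE : i = k.+1 by lia.
  by subst i j.
- split => //; first exact: notin_V1 aV (ltnSn _).
  by apply/V1P; exists k.+1; rewrite ?leqnn.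
Qed.

(* These edges are the first edges of the triples of R'_k(v): every such edge
   followed by a shortest path to v is a shortest walk of length k + 2 < m,
   hence an induced path. *)
Lemma back_edges_R'set :
  Eset e (Nin e k.+2 v) (Nin e k.+1 v) = [set (t.1.1, t.1.2) | t in R'set e k v].
Proof.
apply/setP => -[a b]; rewrite !inE /=; apply/and3P/imsetP.
- case=> ak bk eab.
  have [q [sq pq lq]] := reach_walk (isdist_reach bk).
  case/lastP: q sq pq lq => [|w z] //; rewrite size_rcons last_rcons => -[sw] pq zv.
  subst z; exists (a, b, v) => //; rewrite inE /=.
  apply/existsP; exists (Tuple (introT eqP sw)); rewrite eqxx andbT.
  by apply: (shortest_walk_SIP free); rewrite /= ?size_rcons ?last_rcons ?sw ?eab.
- case=> -[[x y] z]; rewrite inE /= => /existsP[w /andP[Hs /eqP zv]] [-> ->]; subst z.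
  case/and4P: Hs => /= /andP[exy py] _ _; rewrite size_rcons size_tuple last_rcons => Hd.
  split => //; apply: isdist_behead exy _ Hd.
  by have := walk_reach py; rewrite size_rcons size_tuple last_rcons.
Qed.

Lemma card_back_edges : #|Eset e (~: V1) V1| = r'k e k v.
Proof.
rewrite back_edges back_edges_R'set card_in_imset // => -[[x1 y1] z1] [[x2 y2] z2].
by rewrite !inE => /existsP[_ /andP[_ /eqP /= ->]] /existsP[_ /andP[_ /eqP /= ->]] [-> ->].
Qed.

Definition Rpairs (i : nat) : {set T * T} := [set (t.1.2, t.1.1) | t in Rset e i v].
Definition Qpairs (i : nat) : {set T * T} := [set (t.1.1, t.2) | t in Qset e i v].

Lemma card_Rpairs i : #|Rpairs i| = rk e i v.
Proof.
rewrite card_in_imset // => -[[x1 y1] z1] [[x2 y2] z2].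
by move=> /Rset_triple[-> _ _ _ _] /Rset_triple[-> _ _ _ _] [-> ->].
Qed.

Lemma card_Qpairs i : #|Qpairs i| = qk e i v.
Proof.
rewrite card_in_imset // => -[[x1 y1] z1] [[x2 y2] z2].
by move=> /Qset_triple[-> _ _ _ _] /Qset_triple[-> _ _ _ _] [-> ->].
Qed.

(* The index i is recovered from the distance of the second vertex to v. *)
Lemma Rpairs_disjoint i j ab : ab \in Rpairs i -> ab \in Rpairs j -> i = j.
Proof.
case/imsetP=> -[[x1 y1] z1] /Rset_triple[_ d1 _ _ _] ->.
case/imsetP=> -[[x2 y2] z2] /Rset_triple[_ d2 _ _ _] [_ x12].
by subst x2; case: (isdist_uniq d1 d2).
Qed.

(* The index i is recovered from the distance of the first vertex to v. *)
Lemma Qpairs_disjoint i j ab : ab \in Qpairs i -> ab \in Qpairs j -> i = j.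
Proof.
case/imsetP=> -[[x1 y1] z1] /Qset_triple[_ d1 _ _ _] ->.
case/imsetP=> -[[x2 y2] z2] /Qset_triple[_ d2 _ _ _] [x12 _].
by subst x2; case: (isdist_uniq d1 d2).
Qed.

(* A common pair would give an edge from v to a vertex at distance i + 2 from
   v, hence a cycle of length i + 3 <= m. *)
Lemma Rpairs_Qpairs_disjoint i j ab : i.+2 < m ->
  ab \in Rpairs i -> ab \in Qpairs j -> False.
Proof.
move=> im /imsetP[[[x1 y1] z1] /Rset_triple[_ d1 _ _ _] ->].
case/imsetP=> -[[x2 y2] z2] /Qset_triple[_ _ evz _ _] /= [_ zx]; subst z2.
exact: (edge_no_short_return free evz (isdist_reach d1)).
Qed.

Lemma Rpairs_nonadjacent i : 0 < k <= i -> Rpairs i \subset nonadjacent V1 (~: V1).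
Proof.
move=> ki; apply/subsetP => _ /imsetP[[[x y] z] /Rset_triple[_ dx dy nxy nyx] ->].
rewrite inE /= nyx nxy; last by lia.
by rewrite inE (notin_V1 dx) ?andbT; [apply/V1P; exists 1 | lia].
Qed.

Lemma Qpairs_nonadjacent i : 0 < i <= k -> Qpairs i \subset nonadjacent V1 (~: V1).
Proof.
move=> ik; apply/subsetP => _ /imsetP[[[x y] z] /Qset_triple[_ dx evz nxz nzx] ->].
rewrite inE /= nxz nzx inE out_neighbour_notin_V1 // !andbT.
by apply/V1P; exists i.+1 => //; lia.
Qed.

(* The second claim: the families R_i (k <= i <= m - 3) and Q_i (1 <= i <= k)
   inject into pairwise disjoint sets of non-adjacent pairs across (V_1, V_2). *)
Lemma nonadjacent_bound : 0 < k -> tk e m k v <= #|nonadjacent V1 (~: V1)|.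
Proof.
move=> k_pos; rewrite /tk.
rewrite -(eq_bigr _ (fun i _ => card_Rpairs i)) -(eq_bigr _ (fun i _ => card_Qpairs i)).
apply: sum_card_disjoint_le; rewrite ?iota_uniq //.
- by move=> i j ab _ _; apply: Rpairs_disjoint.
- by move=> i j ab _ _; apply: Qpairs_disjoint.
- move=> i j ab; rewrite mem_index_iota => ir _.
  have im : i.+2 < m by lia.
  exact: Rpairs_Qpairs_disjoint im.
- by move=> i; rewrite mem_index_iota => /andP[ki _]; apply: Rpairs_nonadjacent; rewrite k_pos.
- by move=> i; rewrite mem_index_iota => ?; apply: Qpairs_nonadjacent.
Qed.

End Theorem8.

Theorem mainTheorem8 (T : finType) (e : rel T) (m : nat) (v : T) (k : nat) :
  4 <= m -> m_free e m -> 1 <= k <= m - 3 ->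
  let V1 : {set T} := \bigcup_(1 <= i < k.+2) Nin e i v in
  let V2 : {set T} := ~: V1 in
  Eset e V2 V1 = Eset e (Nin e k.+2 v) (Nin e k.+1 v) /\
  #|Eset e V2 V1| = r'k e k v /\
  tk e m k v <= #|[set ab : T * T | [&& ab.1 \in V1, ab.2 \in V2,
                                        ~~ e ab.1 ab.2 & ~~ e ab.2 ab.1]]|.
Proof.
move=> _ free /andP[k_pos km] V1 V2.
have k_small : k.+2 < m by lia.
split; first exact: (back_edges v free k_small).
split; first exact: (card_back_edges v free k_small).
exact: (nonadjacent_bound v free k_small k_pos).
Qed.
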